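(* The relations ${\rm Abv}(x,y,z):=(y<x\wedge xy\bot z)\vee(z<x\wedge xz\bot y)$ and $U(x,y,z):=(y<x\vee z<x)\wedge(y\bot z)$ are primitive positive definable in $(P;{\rm Low})$.
   Context: $(P;\leq)$ is the random partial order (Fraïssé limit of all finite partial orders); $x<y$ means $x\leq y\wedge x\neq y$; $x\bot y$ means $x,y$ incomparable; $xy\bot z$ abbreviates $x\bot z\wedge y\bot z$, and $z\bot xy$ likewise. ${\rm Low}(x,y,z):=(x<y\wedge z\bot xy)\vee(x<z\wedge y\bot xz)$. Primitive positive definable means definable by a formula $\exists\bar y(\psi_1\wedge\cdots\wedge\psi_m)$ with atomic $\psi_i$ (including equalities). *)

From mathcomp Require Import all_boot.
Set Implicit Arguments. Unset Strict Implicit. Unset Printing Implicit Defensive.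

Section Posets.
Variables (T : Type) (le : T -> T -> Prop).

Definition is_partial_order : Prop :=
  (forall x, le x x) /\
  (forall x y, le x y -> le y x -> x = y) /\
  (forall x y z, le x y -> le y z -> le x z).

Definition plt (x y : T) : Prop := le x y /\ x <> y.
Definition pinc (x y : T) : Prop := ~ le x y /\ ~ le y x.

Definition Low (x y z : T) : Prop :=
  (plt x y /\ pinc z x /\ pinc z y) \/ (plt x z /\ pinc y x /\ pinc y z).

Definition Abv (x y z : T) : Prop :=
  (plt y x /\ pinc x z /\ pinc y z) \/ (plt z x /\ pinc x y /\ pinc z y).

Definition Urel (x y z : T) : Prop :=
  (plt y x \/ plt z x) /\ pinc y z.

Definition countable_type : Prop :=
  exists f : T -> nat, injective f.

Definition embeds_all_finite_posets : Prop :=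
  forall (n : nat) (r : 'I_n -> 'I_n -> Prop),
    (forall i, r i i) ->
    (forall i j, r i j -> r j i -> i = j) ->
    (forall i j k, r i j -> r j k -> r i k) ->
    exists f : 'I_n -> T, injective f /\ forall i j, r i j <-> le (f i) (f j).

(* every isomorphism between finite substructures extends to an automorphism;
   a finite partial isomorphism is given by two injective enumerations g, h
   of its domain and image with g i |-> h i *)
Definition ultrahomogeneous : Prop :=
  forall (n : nat) (g h : 'I_n -> T),
    injective g -> injective h ->
    (forall i j, le (g i) (g j) <-> le (h i) (h j)) ->
    exists (s s' : T -> T),
      cancel s s' /\ cancel s' s /\
      (forall x y, le x y <-> le (s x) (s y)) /\
      (forall i, s (g i) = h i).

Definition random_poset : Prop :=
  is_partial_order /\ countable_type /\ embeds_all_finite_posets /\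
  ultrahomogeneous.

(* Primitive positive formulas over the signature {Low} (with equality).
   Variables are indexed by nat: 0,1,2 are the free variables x,y,z,
   all other variables are existentially quantified. *)
Inductive pp_atom : Type :=
| AEq : nat -> nat -> pp_atom
| ALow : nat -> nat -> nat -> pp_atom.

Definition atom_holds (v : nat -> T) (a : pp_atom) : Prop :=
  match a with
  | AEq i j => v i = v j
  | ALow i j k => Low (v i) (v j) (v k)
  end.

Fixpoint all_atoms_hold (v : nat -> T) (l : seq pp_atom) : Prop :=
  match l with
  | [::] => True
  | a :: l' => atom_holds v a /\ all_atoms_hold v l'
  end.

Definition pp_definable_Low (R : T -> T -> T -> Prop) : Prop :=
  exists atoms : seq pp_atom,
    forall x y z : T,
      R x y z <->
      exists v : nat -> T,
        v 0 = x /\ v 1 = y /\ v 2 = z /\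
        all_atoms_hold v atoms.

End Posets.

From Stdlib Require Import Classical_Prop.
From Stdlib Require List.
From mathcomp Require Import all_boot.

Set Implicit Arguments.
Unset Strict Implicit.
Unset Printing Implicit Defensive.

(* Backwards, the formulas only need transitivity: in the formula for U, the
   atom Low(u,t,a) makes a incomparable to t, while Low(a,y,z) puts a below y
   or z; so y and z cannot both lie below t, and Low(y,x,t), Low(z,x,t) force
   one of them below x.  In the extra conjuncts for Abv, Low(v,x,a') makes a'
   incomparable to x, so y and z cannot both lie below x.  Forwards, the
   witnesses t, a, u, a', v are one-point extensions realised by the extension
   property of the random partial order, which follows from universality and
   ultrahomogeneity. *)

Section RandomPartialOrder.
Variables (T : Type) (le : T -> T -> Prop).

Section Transitive.
Hypothesis le_trans : forall x y z, le x y -> le y z -> le x z.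

Lemma pinc_sym x y : pinc le x y -> pinc le y x.
Proof. by case. Qed.

Lemma Low_sym x y z : Low le x y z -> Low le x z y.
Proof. by case=> ?; [right | left]. Qed.

Lemma Abv_sym x y z : Abv le x y z -> Abv le x z y.
Proof. by case=> ?; [right | left]. Qed.

Lemma Low_pinc x y z : Low le x y z -> pinc le y z.
Proof. by case=> [[_ [_ /pinc_sym]] | [_ [_]]]. Qed.

Lemma Low_lt x y z : Low le x y z -> plt le x y \/ plt le x z.
Proof. by case=> [[? _] | [? _]]; [left | right]. Qed.

Lemma Low_Urel x y z t a u :
  Low le y x t -> Low le z x t -> Low le a y z -> Low le u t a -> Urel le x y z.
Proof.
move=> Lyxt Lzxt Layz Luta; split; last exact: Low_pinc Layz.
have [_ not_a_t] := Low_pinc Luta.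
case: (Low_lt Lyxt) => [|[y_t _]]; first by left.
case: (Low_lt Lzxt) => [|[z_t _]]; first by right.
by case: (Low_lt Layz) => -[a_yz _]; case: not_a_t; apply: le_trans a_yz _.
Qed.

Lemma Urel_Abv x y z a v :
  Urel le x y z -> Low le a y z -> Low le v x a -> Abv le x y z.
Proof.
move=> [lt_yz_x inc_yz] Layz Lvxa.
have [_ not_a_x] := Low_pinc Lvxa.
wlog lt_yx : y z lt_yz_x inc_yz Layz / plt le y x.
  move=> wlog_lt; case: (lt_yz_x) => lt; first exact: wlog_lt.
  apply: Abv_sym; apply: wlog_lt => //; last exact: Low_sym.
  - by case: lt_yz_x; [right | left].
  - exact: pinc_sym.
left; split=> //; split=> //; split.
- by move=> x_z; apply: inc_yz.1 (le_trans lt_yx.1 x_z).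
- move=> z_x; apply: not_a_x.
  case: (Low_lt Layz) => -[a_yz _]; first exact: le_trans a_yz lt_yx.1.
  exact: le_trans a_yz z_x.
Qed.

End Transitive.

Section Extension.
Hypothesis le_refl : forall x, le x x.
Hypothesis le_anti : forall x y, le x y -> le y x -> x = y.
Hypothesis le_trans : forall x y z, le x y -> le y z -> le x z.
Hypothesis le_embeds : embeds_all_finite_posets le.
Hypothesis le_uhom : ultrahomogeneous le.

Lemma injective_enum (l : seq T) :
  exists n (p : 'I_n -> T), injective p /\ forall x, List.In x l -> exists i, p i = x.
Proof.
elim: l => [|x l [n [p [p_inj l_p]]]].
  by exists 0, (fun i : 'I_0 => False_rect T ltac:(by case: i)); split=> [[]|] //.
case: (classic (exists i, p i = x)) => [x_p | x_new].
  by exists n, p; split=> // y /= [<- | /l_p].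
pose q (i : 'I_n.+1) := if unlift ord_max i is Some j then p j else x.
exists n.+1, q; split.
- rewrite /q => i j.
  case: (unliftP ord_max i) => [i'|] ->; case: (unliftP ord_max j) => [j'|] -> //.
  + by move/p_inj->.
  + by move=> pi; case: x_new; exists i'.
  + by move=> pj; case: x_new; exists j'.
- move=> y /= [<- | /l_p [i <-]]; first by exists ord_max; rewrite /q unlift_none.
  by exists (lift ord_max i); rewrite /q liftK.
Qed.

Lemma one_point_extension_inj n (p : 'I_n -> T) (D U : T -> Prop) :
  injective p ->
  (forall x y, le x y -> D y -> D x) -> (forall x y, le x y -> U x -> U y) ->
  (forall x y, D x -> U y -> le x y) -> (forall x, D x -> U x -> False) ->
  exists w, forall i, (le (p i) w <-> D (p i)) /\ (le w (p i) <-> U (p i)).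
Proof.
move=> p_inj D_down U_up D_U DU_disj.
(* The index ord_max stands for the new point. *)
pose r (i j : 'I_n.+1) : Prop :=
  match unlift ord_max i, unlift ord_max j with
  | Some a, Some b => le (p a) (p b)
  | Some a, None => D (p a)
  | None, Some b => U (p b)
  | None, None => True
  end.
have [f [f_inj f_r]] :
    exists f : 'I_n.+1 -> T, injective f /\ forall i j, r i j <-> le (f i) (f j).
  apply: le_embeds; rewrite /r.
  - by move=> i; case: unliftP.
  - move=> i j; case: (unliftP ord_max i) => [a|] ->;
      case: (unliftP ord_max j) => [b|] -> //.
    + by move=> ab ba; rewrite (p_inj _ _ (le_anti ab ba)).
    + by move=> Da Ua; case: (DU_disj _ Da Ua).
    + by move=> Ub Db; case: (DU_disj _ Db Ub).
  - move=> i j k; case: (unliftP ord_max i) => [a|] _;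
      case: (unliftP ord_max j) => [b|] _; case: (unliftP ord_max k) => [c|] _ h1 h2;
      by [ | apply: le_trans h1 h2 | apply: D_down h1 h2 | apply: D_U h1 h2 | apply: U_up h2 h1].
pose g i := f (lift ord_max i).
have g_inj : injective g by move=> i j /f_inj /lift_inj.
have g_p i j : le (g i) (g j) <-> le (p i) (p j).
  have := f_r (lift ord_max i) (lift ord_max j).
  by rewrite /r !liftK => h; exact: iff_sym h.
have [s [_ [_ [_ [s_le s_g]]]]] := le_uhom g_inj p_inj g_p.
exists (s (f ord_max)) => i.
have := f_r (lift ord_max i) ord_max; have := f_r ord_max (lift ord_max i).
rewrite /r liftK unlift_none => up down.
split; [apply: iff_trans _ (iff_sym down) | apply: iff_trans _ (iff_sym up)];
  by rewrite -s_g; apply: iff_sym (s_le _ _).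
Qed.

Lemma one_point_extension (l : seq T) (D U : T -> Prop) :
  (forall x y, le x y -> D y -> D x) -> (forall x y, le x y -> U x -> U y) ->
  (forall x y, D x -> U y -> le x y) -> (forall x, D x -> U x -> False) ->
  exists w, forall x, List.In x l -> (le x w <-> D x) /\ (le w x <-> U x).
Proof.
move=> D_down U_up D_U DU_disj.
have [n [p [p_inj l_p]]] := injective_enum l.
have [w p_w] := one_point_extension_inj p_inj D_down U_up D_U DU_disj.
by exists w => x /l_p [i <-].
Qed.

Lemma exists_pinc (l : seq T) :
  exists w, forall x, List.In x l -> pinc le w x.
Proof.
have [|||| w l_w] := @one_point_extension l (fun _ => False) (fun _ => False) => //.
by exists w => x /l_w [[x_w _] [w_x _]].
Qed.

Lemma exists_lt_pinc e (l : seq T) :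
  (forall x, List.In x l -> pinc le e x) ->
  exists w, plt le w e /\ forall x, List.In x l -> pinc le w x.
Proof.
move=> l_e.
have [|||| w l_w] := @one_point_extension (e :: l) (fun _ => False) (le e) => //.
  by move=> x y x_y e_x; apply: le_trans e_x x_y.
have [[e_w _] [_ w_e]] := l_w e (or_introl erefl).
exists w; split; first by split; [exact: w_e | move=> we; apply: e_w; rewrite we].
move=> x /[dup] /l_e [e_x _] /(@or_intror (e = x)) /l_w [[x_w _] [w_x _]].
by split=> [/w_x|/x_w].
Qed.

Lemma exists_gt_pinc e (l : seq T) :
  (forall x, List.In x l -> pinc le e x) ->
  exists w, plt le e w /\ forall x, List.In x l -> pinc le w x.
Proof.
move=> l_e.
have [|||| w l_w] := @one_point_extension (e :: l) (le^~ e) (fun _ => False) => //.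
  by move=> x y x_y y_e; apply: le_trans x_y y_e.
have [[_ e_w] [w_e _]] := l_w e (or_introl erefl).
exists w; split; first by split; [exact: e_w | move=> ew; apply: w_e; rewrite ew].
move=> x /[dup] /l_e [_ x_e] /(@or_intror (e = x)) /l_w [[x_w _] [w_x _]].
by split=> [/w_x|/x_w].
Qed.

Lemma exists_Low_pair x y z :
  plt le y x -> pinc le y z -> exists t, Low le y x t /\ Low le z x t /\ pinc le y t.
Proof.
move=> lt_yx inc_yz.
case: (classic (plt le z x)) => [lt_zx | not_lt_zx].
  have [t t_xyz] := exists_pinc [:: x; y; z].
  have [t_x [t_y t_z]] : pinc le t x /\ pinc le t y /\ pinc le t z.
    by split; [|split]; apply: t_xyz; rewrite /=; tauto.
  by exists t; split; [left | split; [left | apply: pinc_sym]].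
have inc_zx : pinc le z x.
  split=> [z_x | x_z]; last exact: inc_yz.1 (le_trans lt_yx.1 x_z).
  apply: not_lt_zx; split=> // eq_zx; apply: inc_yz.1.
  by rewrite eq_zx; exact: lt_yx.1.
have [|t [lt_zt t_xy]] := @exists_gt_pinc z [:: x; y].
  by move=> w /= [<- | [<- | []]]; last exact: pinc_sym.
have [t_x t_y] : pinc le t x /\ pinc le t y by split; apply: t_xy; rewrite /=; tauto.
exists t; split; first by left.
by split; [right; split=> //; split | ]; apply: pinc_sym.
Qed.

Lemma Urel_witnesses_of_lt x y z :
  plt le y x -> pinc le y z -> exists t a u,
    Low le y x t /\ Low le z x t /\ Low le a y z /\ Low le u t a.
Proof.
move=> lt_yx inc_yz.
have [t [Lyxt [Lzxt inc_yt]]] := exists_Low_pair lt_yx inc_yz.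
have [|a [lt_ay a_zt]] := @exists_lt_pinc y [:: z; t].
  by move=> w /= [<- | [<- | []]].
have [a_z a_t] : pinc le a z /\ pinc le a t by split; apply: a_zt; rewrite /=; tauto.
have [|u [lt_ut u_a]] := @exists_lt_pinc t [:: a].
  by move=> w /= [<- | []]; apply: pinc_sym.
exists t, a, u; do 2!split=> //; split.
  by left; split; [|split; apply: pinc_sym].
by left; split=> //; split=> //; apply: pinc_sym; apply: u_a; left.
Qed.

Lemma Urel_iff_Low x y z :
  Urel le x y z <-> exists t a u,
    Low le y x t /\ Low le z x t /\ Low le a y z /\ Low le u t a.
Proof.
split=> [[[lt_yx | lt_zx] inc_yz] | [t [a [u [Lyxt [Lzxt [Layz Luta]]]]]]].
- exact: Urel_witnesses_of_lt.
- have [t [a [u [Lzxt [Lyxt [Lazy Luta]]]]]] :=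
    Urel_witnesses_of_lt lt_zx (pinc_sym inc_yz).
  by exists t, a, u; do 2!split=> //; split=> //; apply: Low_sym.
- exact: Low_Urel Lyxt Lzxt Layz Luta.
Qed.

Lemma Abv_witnesses x y z :
  pinc le z x -> pinc le z y -> exists a v, Low le a y z /\ Low le v x a.
Proof.
move=> inc_zx inc_zy.
have [|a [lt_az a_xy]] := @exists_lt_pinc z [:: x; y].
  by move=> w /= [<- | [<- | []]].
have [a_x a_y] : pinc le a x /\ pinc le a y by split; apply: a_xy; rewrite /=; tauto.
have [|v [lt_vx v_a]] := @exists_lt_pinc x [:: a].
  by move=> w /= [<- | []]; apply: pinc_sym.
exists a, v; split; first by right; split; [|split; apply: pinc_sym].
by left; split=> //; split=> //; apply: pinc_sym; apply: v_a; left.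
Qed.

Lemma Abv_iff_Low x y z :
  Abv le x y z <-> Urel le x y z /\ exists a v, Low le a y z /\ Low le v x a.
Proof.
split=> [[[lt_yx [inc_xz inc_yz]] | [lt_zx [inc_xy inc_zy]]] | [Uxyz [a [v [Layz Lvxa]]]]].
- split; first by split; first left.
  by apply: Abv_witnesses; apply: pinc_sym.
- split; first by split; [right | apply: pinc_sym].
  have [a [v [Lazy Lvxa]]] := Abv_witnesses (pinc_sym inc_xy) (pinc_sym inc_zy).
  by exists a, v; split=> //; apply: Low_sym.
- exact: Urel_Abv Uxyz Layz Lvxa.
Qed.

End Extension.
End RandomPartialOrder.

Theorem lemma43 (T : Type) (le : T -> T -> Prop) (HP : random_poset le) :
  pp_definable_Low le (Abv le) /\ pp_definable_Low le (Urel le).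
Proof.
have [[le_refl [le_anti le_trans]] [_ [le_embeds le_uhom]]] := HP.
have Urel_iff := Urel_iff_Low le_refl le_anti le_trans le_embeds le_uhom.
have Abv_iff := Abv_iff_Low le_refl le_anti le_trans le_embeds le_uhom.
split.
- exists [:: ALow 1 0 3; ALow 2 0 3; ALow 4 1 2; ALow 5 3 4; ALow 6 1 2; ALow 7 0 6].
  move=> x y z; rewrite Abv_iff Urel_iff.
  split=> [[[t [a [u Ls]]] [a' [v Ls']]] | [w [<- [<- [<- /= atoms]]]]].
    by exists (nth x [:: x; y; z; t; a; u; a'; v]); rewrite /=; tauto.
  by split; [exists (w 3), (w 4), (w 5) | exists (w 6), (w 7)]; tauto.
- exists [:: ALow 1 0 3; ALow 2 0 3; ALow 4 1 2; ALow 5 3 4].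
  move=> x y z; rewrite Urel_iff.
  split=> [[t [a [u Ls]]] | [w [<- [<- [<- /= atoms]]]]].
    by exists (nth x [:: x; y; z; t; a; u]); rewrite /=; tauto.
  by exists (w 3), (w 4), (w 5); tauto.
Qed.
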